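(* Let $G,G'$ be simplicial groups acting on simplicial sets $X,X'$ respectively, and assume the orbit spaces $X/G$ and $X'/G'$ are discrete. Let $\varphi\colon G\to G'$ be a homomorphism of simplicial groups and $f\colon X\to X'$ a simplicial map equivariant along $\varphi$ (i.e. $f(gx)=\varphi(g)f(x)$). If $\varphi$ is a Kan fibration, then so is $f$.
   Context: The orbit space $X/G$ is the levelwise quotient of $X$ by the $G$-action; it is discrete if it is a constant simplicial set (all degeneracies from level $0$ are bijections). *)

From mathcomp Require Import all_boot.
Set Warnings "-notation-overridden".
Set Implicit Arguments. Unset Strict Implicit. Unset Printing Implicit Defensive.

(* Morphisms [m] -> [n] of Delta: monotone maps 'I_m.+1 -> 'I_n.+1. *)
Definition Dmap (m n : nat) :=
  {f : 'I_m.+1 -> 'I_n.+1 | forall i j : 'I_m.+1, i <= j -> f i <= f j}.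

Definition Dfun m n (f : Dmap m n) : 'I_m.+1 -> 'I_n.+1 := proj1_sig f.

Definition Did (n : nat) : Dmap n n.
Proof. by exists (fun i => i). Defined.

Definition Dcomp l m n (g : Dmap m n) (f : Dmap l m) : Dmap l n.
Proof.
exists (fun i => Dfun g (Dfun f i)).
by move=> i j hij; apply: (proj2_sig g); apply: (proj2_sig f).
Defined.

Definition coface m (i : 'I_m.+2) : Dmap m m.+1.
Proof.
exists (fun j : 'I_m.+1 => lift i j).
by move=> a b hab; rewrite /= leq_bump2.
Defined.

Definition toPoint (n : nat) : Dmap n 0.
Proof. by exists (fun _ => ord0). Defined.

Record sSet := SSet {
  sobj :> nat -> Type;
  smap : forall m n, Dmap m n -> sobj n -> sobj m;
  smap_ext : forall m n (f g : Dmap m n) x,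
      (forall i, Dfun f i = Dfun g i) -> smap f x = smap g x;
  smap_id : forall n x, smap (Did n) x = x;
  smap_comp : forall l m n (g : Dmap m n) (f : Dmap l m) x,
      smap (Dcomp g f) x = smap f (smap g x)
}.

Definition face (X : sSet) m (i : 'I_m.+2) : X m.+1 -> X m := smap (coface i).

Definition is_smap (X Y : sSet) (f : forall n, X n -> Y n) : Prop :=
  forall m n (a : Dmap m n) x, f m (smap a x) = smap a (f n x).

Record sGroup := SGroup {
  gset :> sSet;
  gmul : forall n, gset n -> gset n -> gset n;
  gone : forall n, gset n;
  ginv : forall n, gset n -> gset n;
  gmulA : forall n (x y z : gset n), gmul x (gmul y z) = gmul (gmul x y) z;
  gmul1 : forall n (x : gset n), gmul (gone n) x = x;
  gmulV : forall n (x : gset n), gmul (ginv x) x = gone n;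
  gmap_mul : forall m n (a : Dmap m n) (x y : gset n),
      smap a (gmul x y) = gmul (smap a x) (smap a y)
}.

Definition is_shom (G H : sGroup) (phi : forall n, G n -> H n) : Prop :=
  is_smap phi /\ forall n (x y : G n), phi n (gmul x y) = gmul (phi n x) (phi n y).

Record sAction (G : sGroup) (X : sSet) := SAction {
  act : forall n, G n -> X n -> X n;
  act_one : forall n (x : X n), act (gone G n) x = x;
  act_mul : forall n (g h : G n) (x : X n), act (gmul g h) x = act g (act h x);
  act_nat : forall m n (a : Dmap m n) (g : G n) (x : X n),
      smap a (act g x) = act (smap a g) (smap a x)
}.

Definition same_orbit G X (A : sAction G X) n (x y : X n) : Prop :=
  exists g : G n, act A g x = y.

(* The orbit space X/G is discrete (constant): for every n the degeneracy
   (X/G)_0 -> (X/G)_n induced by [n] -> [0] is a bijection of orbit sets. *)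
Definition orbit_discrete G X (A : sAction G X) : Prop :=
  forall n,
    (forall x : X n, exists x0 : X 0, same_orbit A (smap (toPoint n) x0) x) /\
    (forall x0 y0 : X 0,
        same_orbit A (smap (toPoint n) x0) (smap (toPoint n) y0) ->
        same_orbit A x0 y0).

(* Horns Lambda^{m+1}_k in X: families (x_i)_{i <> k} of m-simplices agreeing
   on the overlaps of the faces (values at i = k are ignored). *)
Definition is_horn (X : sSet) m (k : 'I_m.+2) (x : 'I_m.+2 -> X m) : Prop :=
  forall (i j : 'I_m.+2), i != k -> j != k ->
  forall p (a b : Dmap p m),
    (forall t, Dfun (coface i) (Dfun a t) = Dfun (coface j) (Dfun b t)) ->
    smap a (x i) = smap b (x j).

Definition Kan_fibration (X Y : sSet) (f : forall n, X n -> Y n) : Prop :=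
  forall m (k : 'I_m.+2) (x : 'I_m.+2 -> X m) (y : Y m.+1),
    is_horn k x ->
    (forall i, i != k -> face i y = f m (x i)) ->
    exists z : X m.+1, (forall i, i != k -> face i z = x i) /\ f m.+1 z = y.

From mathcomp Require Import all_boot zify.
Set Warnings "-notation-overridden".
Set Implicit Arguments. Unset Strict Implicit. Unset Printing Implicit Defensive.

(* Discreteness of X/G means every simplex x lies in the orbit of the totally
   degenerate simplex on any of its vertices; hence simplices sharing a vertex
   are in the same orbit.  The technical core is a "relative transitivity"
   statement: if a, b are in one orbit and agree on all faces off a gap [q, i)
   of face indices, then some t with t a = b is trivial on the part of the
   boundary off that gap.  It is proved by shrinking the gap one index at a
   time, each step correcting t by a stabilizer element built from a
   degeneracy.  The same face-by-face correction fills every horn of X.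
   For the theorem, fill a horn of X by w, move f(w) onto the prescribed
   simplex y by some t trivial on the horn, lift t along phi to s trivial on
   the horn, and take s w. *)

Lemma delta_bound n j (x : 'I_n.+1) : bump j x < n.+2.
Proof. by rewrite /bump; have := ltn_ord x; lia. Qed.

Definition delta (n j : nat) : Dmap n n.+1.
Proof. by exists (fun x => Ordinal (delta_bound j x)) => a b /=; rewrite /bump; lia. Defined.

Lemma sigma_bound n l (x : 'I_n.+2) : minn (x - (l < x)) n < n.+1.
Proof. lia. Qed.

Definition sigma (n l : nat) : Dmap n.+1 n.
Proof. by exists (fun x => Ordinal (sigma_bound l x)) => a b /=; lia. Defined.

Lemma vertex_bound n j : minn j n < n.+1.
Proof. lia. Qed.

Definition vertex (n j : nat) : Dmap 0 n.
Proof. by exists (fun _ => Ordinal (vertex_bound n j)). Defined.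

Lemma deltaE n j x : (Dfun (delta n j) x : nat) = bump j x.
Proof. by []. Qed.

Lemma sigmaE n l x : (Dfun (sigma n l) x : nat) = minn (x - (l < x)) n.
Proof. by []. Qed.

Lemma DcompE l m n (g : Dmap m n) (f : Dmap l m) x :
  Dfun (Dcomp g f) x = Dfun g (Dfun f x).
Proof. by []. Qed.

Lemma smapP (X : sSet) m n (f g : Dmap m n) (x : X n) :
  (forall t, (Dfun f t : nat) = Dfun g t) -> smap f x = smap g x.
Proof. by move=> h; apply: smap_ext => t; apply: val_inj; apply: h. Qed.

Lemma smap_idP (X : sSet) n (f : Dmap n n) (x : X n) :
  (forall t, (Dfun f t : nat) = t) -> smap f x = x.
Proof. by move=> h; rewrite -[RHS](smap_id (s:=X)); apply: smapP. Qed.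

Lemma smap0 (X : sSet) (e : Dmap 0 0) (x : X 0) : smap e x = x.
Proof. by apply: smap_idP => t; have := ltn_ord (Dfun e t); have := ltn_ord t; lia. Qed.

Lemma face_delta (X : sSet) m (i : 'I_m.+2) (y : X m.+1) :
  face i y = smap (delta m i) y.
Proof. exact: smapP. Qed.

Lemma delta_face (X : sSet) m j (y : X m.+1) :
  j <= m.+1 -> smap (delta m j) y = face (inord j) y.
Proof. by move=> hj; rewrite face_delta inordK. Qed.

Lemma face_face_lt (X : sSet) n i j (w : X n.+2) : j < i ->
  smap (delta n j) (smap (delta n.+1 i) w) = smap (delta n i.-1) (smap (delta n.+1 j) w).
Proof. by move=> hji; rewrite -!smap_comp; apply: smapP => t /=; rewrite /bump; lia. Qed.

Lemma face_face_ge (X : sSet) n i j (w : X n.+2) : i <= j ->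
  smap (delta n j) (smap (delta n.+1 i) w) = smap (delta n i) (smap (delta n.+1 j.+1) w).
Proof. by move=> hij; rewrite -!smap_comp; apply: smapP => t /=; rewrite /bump; lia. Qed.

Lemma face_degen (X : sSet) n c l (x : X n) : l <= c <= l.+1 ->
  smap (delta n c) (smap (sigma n l) x) = x.
Proof.
by move=> hc; rewrite -smap_comp; apply: smap_idP => t /=; have := ltn_ord t; rewrite /bump; lia.
Qed.

Lemma other_index m (k : nat) : exists2 j, j <= m.+1 & j != k.
Proof. by exists (k == 0 : nat); case: k. Qed.

Definition misses l n (h : Dmap l n) (j : nat) : Prop := forall t, (Dfun h t : nat) != j.

Lemma delta_misses n j : misses (delta n j) j.
Proof. by move=> t; rewrite deltaE /bump; lia. Qed.

Lemma factor_delta (X : sSet) l n j (h : Dmap l n.+1) (x : X n.+1) :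
  j <= n.+1 -> misses h j ->
  exists h' : Dmap l n, smap h x = smap h' (smap (delta n j) x).
Proof.
move=> hj hmiss.
have hb t : minn (unbump j (Dfun h t)) n < n.+1 by lia.
have hm (a b : 'I_l.+1) : a <= b -> Ordinal (hb a) <= Ordinal (hb b).
  by move=> hab /=; have := proj2_sig h a b hab; rewrite /unbump /Dfun; lia.
exists (exist _ _ hm); rewrite -smap_comp; apply: smapP => t /=.
by have := hmiss t; have := ltn_ord (Dfun h t); rewrite /bump /unbump; lia.
Qed.

Lemma gmulrV (G : sGroup) n (x : G n) : gmul x (ginv x) = gone G n.
Proof.
rewrite -[LHS]gmul1 -{1}(gmulV (ginv x)) -gmulA (gmulA (ginv x) x) gmulV gmul1.
by rewrite gmulV.
Qed.

Lemma gmulr1 (G : sGroup) n (x : G n) : gmul x (gone G n) = x.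
Proof. by rewrite -(gmulV x) gmulA gmulrV gmul1. Qed.

Lemma gidem (G : sGroup) n (s : G n) : gmul s s = s -> s = gone G n.
Proof. by move=> hs; rewrite -(gmulV s) -{3}hs gmulA gmulV gmul1. Qed.

Lemma ginv_unique (G : sGroup) n (y z : G n) : gmul y z = gone G n -> y = ginv z.
Proof. by move=> h; rewrite -(gmulr1 y) -(gmulrV z) gmulA h gmul1. Qed.

Lemma ginvK (G : sGroup) n (x : G n) : ginv (ginv x) = x.
Proof. by apply/esym/ginv_unique; rewrite gmulrV. Qed.

Lemma ginv1 (G : sGroup) n : ginv (gone G n) = gone G n.
Proof. by apply/esym/ginv_unique; rewrite gmul1. Qed.

Lemma smap_gone (G : sGroup) m n (a : Dmap m n) : smap a (gone G n) = gone G m.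
Proof. by apply: gidem; rewrite -gmap_mul gmul1. Qed.

Lemma smap_ginv (G : sGroup) m n (a : Dmap m n) (x : G n) :
  smap a (ginv x) = ginv (smap a x).
Proof. by apply: ginv_unique; rewrite -gmap_mul gmulV smap_gone. Qed.

Lemma shom_gone (G G' : sGroup) (phi : forall n, G n -> G' n) n :
  is_shom phi -> phi n (gone G n) = gone G' n.
Proof. by move=> [_ hmul]; apply: gidem; rewrite -hmul gmul1. Qed.

Lemma actK (G : sGroup) (X : sSet) (A : sAction G X) n (g : G n) (x : X n) :
  act A (ginv g) (act A g x) = x.
Proof. by rewrite -act_mul gmulV act_one. Qed.

Definition cst (X : sSet) n (v : X 0) : X n := smap (toPoint n) v.

Lemma cst_smap (X : sSet) m n (a : Dmap m n) (v : X 0) : smap a (cst n v) = cst m v.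
Proof. by rewrite /cst -smap_comp; apply: smapP. Qed.

Lemma cst0 (X : sSet) (v : X 0) : cst 0 v = v.
Proof. exact: smap0. Qed.

Section Orbits.
Variables (G : sGroup) (X : sSet) (A : sAction G X).

Lemma same_orbit_sym n (x y : X n) : same_orbit A x y -> same_orbit A y x.
Proof. by move=> [g <-]; exists (ginv g); rewrite actK. Qed.

Lemma same_orbit_trans n (x y z : X n) :
  same_orbit A x y -> same_orbit A y z -> same_orbit A x z.
Proof. by move=> [g <-] [h <-]; exists (gmul h g); rewrite act_mul. Qed.

Lemma same_orbit_act n (g : G n) (x : X n) : same_orbit A x (act A g x).
Proof. by exists g. Qed.

Hypothesis Hd : orbit_discrete A.

(* Each simplex lies in the orbit of the degenerate simplex on any of its
   vertices (only the surjectivity half of discreteness is needed). *)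
Lemma orbit_vertex n (e : Dmap 0 n) (x : X n) : same_orbit A (cst n (smap e x)) x.
Proof.
have [x0 [g hg]] := (Hd n).1 x.
have ex : smap e x = act A (smap e g) x0.
  by rewrite -hg act_nat cst_smap cst0.
exists (gmul g (ginv (cst n (smap e g)))).
by rewrite ex {2}/cst act_nat -act_mul -gmulA gmulV gmulr1.
Qed.

Lemma same_orbit_vertex n (e e' : Dmap 0 n) (x y : X n) :
  smap e x = smap e' y -> same_orbit A x y.
Proof.
move=> hv; apply: same_orbit_trans (orbit_vertex e' y).
by rewrite -hv; apply: same_orbit_sym; apply: orbit_vertex.
Qed.

Lemma same_orbit_face n j (a b : X n.+1) :
  smap (delta n j) a = smap (delta n j) b -> same_orbit A a b.
Proof.
move=> hab; apply: (same_orbit_vertex (e := Dcomp (delta n j) (vertex n 0))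
  (e' := Dcomp (delta n j) (vertex n 0))).
by rewrite !smap_comp hab.
Qed.

End Orbits.

(* For a gap [q, i) of face indices, a group element s : G n is
   trivial off the gap when its restriction along every map into [n] that
   misses some index j outside [q, i) is trivial, i.e. s is trivial on the
   union of the faces off the gap. *)
Definition off_gap (q i j : nat) : bool := (j < q) || (i <= j).

Definition trivial_off (G : sGroup) n q i (s : G n) : Prop :=
  forall l (h : Dmap l n) j, j <= n -> off_gap q i j -> misses h j ->
  smap h s = gone G l.

Definition agree_off (X : sSet) n q i (z : X n.+1) (xs : nat -> X n) : Prop :=
  forall j, j <= n.+1 -> off_gap q i j -> smap (delta n j) z = xs j.

Section TrivialOff.
Variable G : sGroup.

Lemma trivial_off_full n (s : G n.+1) : trivial_off 0 n.+2 s.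
Proof. by move=> l h j hj; rewrite /off_gap; lia. Qed.

Lemma trivial_off_faces n q i (s : G n.+1) j :
  trivial_off q i s -> j <= n.+1 -> off_gap q i j -> smap (delta n j) s = gone G n.
Proof. by move=> hs hj hoff; apply: (hs _ _ j) => //; apply: delta_misses. Qed.

Lemma trivial_off_mul n q i (s s' : G n) :
  trivial_off q i s -> trivial_off q i s' -> trivial_off q i (gmul s s').
Proof. by move=> hs hs' l h j hj hoff hm; rewrite gmap_mul (hs _ _ j) // (hs' _ _ j) // gmul1. Qed.

Lemma trivial_off_inv n q i (s : G n) : trivial_off q i s -> trivial_off q i (ginv s).
Proof. by move=> hs l h j hj hoff hm; rewrite smap_ginv (hs _ _ j) // ginv1. Qed.

Lemma trivial_off_conj n q i (g s : G n) :
  trivial_off q i s -> trivial_off q i (gmul g (gmul s (ginv g))).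
Proof. by move=> hs l h j hj hoff hm; rewrite !gmap_mul (hs _ _ j) // gmul1 smap_ginv gmulrV. Qed.

Lemma trivial_off_face n q i c (t : G n.+1) :
  trivial_off q i t -> q <= c < i -> trivial_off q i.-1 (smap (delta n c) t).
Proof.
move=> ht hc l h j hj hoff hm; rewrite -smap_comp.
apply: (ht _ _ (bump c j)); first by rewrite /bump; lia.
  by move: hoff; rewrite /off_gap /bump; lia.
by move=> x; rewrite DcompE deltaE; have := hm x; rewrite /bump; lia.
Qed.

(* Conversely, a degeneracy s_l of an element trivial off [q, i - 1) is
   trivial off [q, i), for l = c or c - 1 chosen so that the gap has room. *)
Lemma trivial_off_degen n q i c (s : G n) :
  trivial_off q i.-1 s -> q <= c < i -> q.+1 < i -> i <= n.+2 ->
  trivial_off q i (smap (sigma n (c - (q < c))) s).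
Proof.
move=> hs hc hgap hi l h j hj hoff hm; rewrite -smap_comp.
apply: (hs _ _ (j - (i <= j))); first by move: hoff; rewrite /off_gap; lia.
  by move: hoff; rewrite /off_gap; lia.
move=> x; rewrite DcompE sigmaE; have := hm x; have := ltn_ord (Dfun h x).
by move: hoff; rewrite /off_gap; lia.
Qed.

Lemma trivial_off_close n q i q' i' c (t : G n.+1) :
  trivial_off q i t -> smap (delta n c) t = gone G n ->
  (forall j, off_gap q' i' j -> off_gap q i j || (j == c)) -> trivial_off q' i' t.
Proof.
move=> ht hc hsub l h j hj hoff hm.
have /orP [hoff'|/eqP ejc] := hsub j hoff; first exact: ht hoff' hm.
have [h' ->] := factor_delta t hj hm.
by rewrite -ejc in hc; rewrite hc smap_gone.
Qed.

End TrivialOff.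

Lemma agree_off_close (X : sSet) n q i q' i' c (z : X n.+1) (xs : nat -> X n) :
  agree_off q i z xs -> smap (delta n c) z = xs c ->
  (forall j, off_gap q' i' j -> off_gap q i j || (j == c)) -> agree_off q' i' z xs.
Proof.
move=> hz hc hsub j hj hoff.
by have /orP [hoff'|/eqP ->] := hsub j hoff; [exact: hz | exact: hc].
Qed.

Lemma gap_induction (P : nat -> nat -> Prop) N q i : q < i <= N -> P 0 N ->
  (forall q', q' < q -> P q' N -> P q'.+1 N) ->
  (forall i', i < i' <= N -> P q i' -> P q i'.-1) -> P q i.
Proof.
move=> hqi h0 hlow hhigh.
have hq : forall q', q' <= q -> P q' N.
  by elim=> [//|q' IH] hq'; apply: hlow; [lia | apply: IH; lia].
have hi : forall d, d <= N - i -> P q (N - d).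
  elim=> [|d IH] hd; first by rewrite subn0; apply: hq.
  have -> : N - d.+1 = (N - d).-1 by lia.
  by apply: hhigh; [lia | apply: IH; lia].
by have := hi (N - i) (leqnn _); rewrite (_ : N - (N - i) = i) //; lia.
Qed.

Lemma push_face (G : sGroup) (X : sSet) (A : sAction G X) n q i c
    (z : X n.+2) (t : G n.+1) :
  trivial_off q i.-1 t -> q <= c < i -> q.+1 < i -> i <= n.+3 ->
  smap (delta n.+1 c) (act A (smap (sigma n.+1 (c - (q < c))) t) z)
    = act A t (smap (delta n.+1 c) z) /\
  agree_off q i (act A (smap (sigma n.+1 (c - (q < c))) t) z)
    (fun j => smap (delta n.+1 j) z).
Proof.
move=> ht hc hgap hi; split; first by rewrite act_nat face_degen //; lia.
move=> j hj hoff; rewrite act_nat.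
by rewrite (trivial_off_faces (trivial_off_degen ht hc hgap hi) hj hoff) act_one.
Qed.

Section RelativeTransitivity.
Variables (G : sGroup) (X : sSet) (A : sAction G X).
Hypothesis Hd : orbit_discrete A.

(* An element e of the stabilizer of the face d_c a, trivial off [q, i - 1),
   lifts to an element u of the stabilizer of a with d_c u = e, trivial off
   [q, i): conjugate e to the stabilizer of a degenerate vertex simplex,
   apply a degeneracy there and conjugate back. *)
Lemma stab_lift n q i c (a : X n.+1) (e : G n) :
  act A e (smap (delta n c) a) = smap (delta n c) a ->
  trivial_off q i.-1 e -> q <= c < i -> q.+1 < i -> i <= n.+2 ->
  exists u : G n.+1,
    [/\ act A u a = a, smap (delta n c) u = e & trivial_off q i u].
Proof.
move=> he htriv hc hgap hi.
set v := smap (vertex n.+1 0) a.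
have [g hg] := orbit_vertex Hd (vertex n.+1 0) a; rewrite -/v in hg.
set g' := smap (delta n c) g; set l := c - (q < c).
pose e' := gmul (ginv g') (gmul e g').
have hfix : act A e' (cst n v) = cst n v.
  have hda : smap (delta n c) a = act A g' (cst n v) by rewrite -hg act_nat cst_smap.
  by rewrite /e' !act_mul -hda he hda actK.
exists (gmul g (gmul (smap (sigma n l) e') (ginv g))); split.
- rewrite -{2}hg !act_mul -hg actK; congr (act A g _).
  by rewrite -(cst_smap (sigma n l) v) -act_nat hfix.
- rewrite (gmap_mul (delta n c) g) (gmap_mul (delta n c) (smap _ _)) smap_ginv -/g'.
  rewrite face_degen; last by rewrite /l; lia.
  by rewrite /e' !gmulA gmulrV gmul1 -!gmulA gmulrV gmulr1.
- apply: trivial_off_conj; apply: trivial_off_degen => //.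
  by rewrite /e' -{2}(ginvK g'); apply: trivial_off_conj.
Qed.

Lemma correction_step n q i c (a b : X n.+1) (t : G n.+1) :
  act A t a = b -> trivial_off q i t -> q <= c < i -> q.+1 < i -> i <= n.+2 ->
  smap (delta n c) a = smap (delta n c) b ->
  exists t' : G n.+1,
    [/\ act A t' a = b, trivial_off q i t' & smap (delta n c) t' = gone G n].
Proof.
move=> ht htriv hc hgap hi hab.
set e := smap (delta n c) t.
have hfix : act A (ginv e) (smap (delta n c) a) = smap (delta n c) a.
  by rewrite {1}hab -ht act_nat actK.
have [u [hu hue hut]] :=
  stab_lift hfix (trivial_off_inv (trivial_off_face htriv hc)) hc hgap hi.
exists (gmul t u); split.
- by rewrite act_mul hu.
- exact: trivial_off_mul.
- by rewrite gmap_mul hue gmulrV.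
Qed.

Lemma rel_trans n q i (a b : X n.+1) :
  same_orbit A a b -> q < i <= n.+2 ->
  agree_off q i a (fun j => smap (delta n j) b) ->
  exists t : G n.+1, act A t a = b /\ trivial_off q i t.
Proof.
move=> [t0 ht0] hqi hab.
pose P q' i' := exists t : G n.+1, act A t a = b /\ trivial_off q' i' t.
have close q' i' q'' i'' c : q' <= c < i' -> q'.+1 < i' -> i' <= n.+2 ->
    off_gap q i c -> (forall j, off_gap q'' i'' j -> off_gap q' i' j || (j == c)) ->
    P q' i' -> P q'' i''.
  move=> hc hgap hi' hoff hsub [t [ht htriv]].
  have [|t' [ht' htriv' hc']] := correction_step ht htriv hc hgap hi'.
    by apply: hab => //; lia.
  by exists t'; split=> //; apply: trivial_off_close htriv' hc' hsub.
apply: (gap_induction (P := P) hqi).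
- by exists t0; split=> //; apply: trivial_off_full.
- by move=> q' hq'; apply: (close q' n.+2 _ _ q'); rewrite /off_gap; lia.
- by move=> i' hi'; apply: (close q i' _ _ i'.-1); rewrite /off_gap; lia.
Qed.

End RelativeTransitivity.

Section HornFilling.
Variables (G : sGroup) (X : sSet) (A : sAction G X).
Hypothesis Hd : orbit_discrete A.

Section Horn.
Variables (p : nat) (k : 'I_p.+3) (x : 'I_p.+3 -> X p.+1).
Hypothesis Hh : is_horn k x.

Let xs (j : nat) : X p.+1 := x (inord j).

Lemma inord_neq c : c <= p.+2 -> c != k -> (inord c : 'I_p.+3) != k.
Proof. by move=> hc; apply: contra => /eqP <-; rewrite inordK. Qed.

Lemma horn_faces j c : j < c -> c <= p.+2 -> c != k -> j != k ->
  smap (delta p j) (xs c) = smap (delta p c.-1) (xs j).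
Proof.
move=> hjc hc hck hjk; apply: Hh; try apply: inord_neq => //; try lia.
by move=> t; apply: val_inj; rewrite /= !inordK /bump; lia.
Qed.

Lemma horn_vertex_index c : c <= p.+2 -> c != k -> bump c (minn (k - (c < k)) p.+1) = k.
Proof. by rewrite /bump => hc hck; have := ltn_ord k; lia. Qed.

Lemma horn_vertex c c' : c <= p.+2 -> c' <= p.+2 -> c != k -> c' != k ->
  smap (vertex p.+1 (k - (c < k))) (xs c) = smap (vertex p.+1 (k - (c' < k))) (xs c').
Proof.
move=> hc hc' hck hck'; apply: Hh; try apply: inord_neq => //.
by move=> t; apply: val_inj; rewrite /= !inordK ?horn_vertex_index //; lia.
Qed.

Lemma horn_fill_step q i c (z : X p.+2) :
  agree_off q i z xs -> same_orbit A (smap (delta p.+1 c) z) (xs c) ->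
  q <= k < i -> i <= p.+3 -> q <= c < i -> q.+1 < i -> c != k ->
  exists g : G p.+2,
    agree_off q i (act A g z) xs /\ smap (delta p.+1 c) (act A g z) = xs c.
Proof.
move=> hz horb hk hi hc hgap hck.
have hfaces : agree_off q i.-1 (smap (delta p.+1 c) z) (fun j => smap (delta p j) (xs c)).
  move=> j hj /orP [hjq|hij].
  - rewrite face_face_lt; last lia.
    rewrite hz; [|lia|by rewrite /off_gap hjq].
    by rewrite (horn_faces (j := j) (c := c)) //; lia.
  - rewrite face_face_ge; last lia.
    rewrite hz; [|lia|by rewrite /off_gap; lia].
    by rewrite (horn_faces (j := c) (c := j.+1)) //; lia.
have [|t [ht htriv]] := rel_trans Hd horb _ hfaces; first lia.
have [hc' hoff] := push_face A z htriv hc hgap hi.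
exists (smap (sigma p.+1 (c - (q < c))) t); split; last by rewrite hc' ht.
by move=> j hj hoffj; rewrite hoff //; apply: hz.
Qed.

(* Starting from the degenerate simplex on the common vertex, correct the
   faces one at a time, shrinking the gap from [0, p+3) to [k, k+1). *)
Lemma fill_horn : exists w : X p.+2, forall i, i != k -> face i w = x i.
Proof.
have hk := ltn_ord k.
have [c0 hc0p hc0] := other_index p.+1 k.
set v := smap (vertex p.+1 (k - (c0 < k))) (xs c0).
have horbit c : c <= p.+2 -> c != k -> same_orbit A (cst p.+1 v) (xs c).
  by move=> hc hck; rewrite /v (horn_vertex hc0p hc hc0 hck); apply: orbit_vertex.
pose P q i := exists g : G p.+2, agree_off q i (act A g (cst p.+2 v)) xs.
have close q i q' i' c : q <= k < i -> i <= p.+3 -> q <= c < i -> q.+1 < i ->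
    c != k -> (forall j, off_gap q' i' j -> off_gap q i j || (j == c)) ->
    P q i -> P q' i'.
  move=> hki hi hc hgap hck hsub [g hg].
  have horb : same_orbit A (smap (delta p.+1 c) (act A g (cst p.+2 v))) (xs c).
    apply: same_orbit_trans (horbit c _ hck); last lia.
    by apply: same_orbit_sym; rewrite act_nat cst_smap; apply: same_orbit_act.
  have [g' [hg' hc']] := horn_fill_step hg horb hki hi hc hgap hck.
  by exists (gmul g' g); rewrite act_mul; apply: agree_off_close hg' hc' hsub.
have [g hg] : P k k.+1.
  apply: (gap_induction (P := P) (N := p.+3)); first lia.
  - by exists (gone G p.+2) => j hj; rewrite /off_gap; lia.
  - by move=> q' hq'; apply: (close q' p.+3 _ _ q'); rewrite /off_gap; lia.
  - by move=> i' hi'; apply: (close k i' _ _ i'.-1); rewrite /off_gap; lia.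
exists (act A g (cst p.+2 v)) => i hik.
have hik' : (i : nat) != k by [].
have hip := ltn_ord i.
by rewrite face_delta hg ?/xs ?inord_val //; rewrite /off_gap; lia.
Qed.

End Horn.

Lemma horn_filler m (k : 'I_m.+2) (x : 'I_m.+2 -> X m) :
  is_horn k x -> exists w : X m.+1, forall i, i != k -> face i w = x i.
Proof.
case: m k x => [|p] k x Hh; last exact: fill_horn.
pose i0 : 'I_2 := inord (1 - k).
exists (cst 1 (x i0)) => i hik.
have -> : i = i0.
  apply: val_inj; rewrite /i0 /= inordK; last lia.
  by have := ltn_ord i; have := ltn_ord k; move: hik; rewrite -(inj_eq val_inj) /=; lia.
by rewrite face_delta cst_smap cst0.
Qed.

End HornFilling.

Theorem proposition4p4 (G G' : sGroup) (X X' : sSet)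
  (A : sAction G X) (A' : sAction G' X')
  (phi : forall n, G n -> G' n) (f : forall n, X n -> X' n) :
  orbit_discrete A -> orbit_discrete A' ->
  is_shom phi -> is_smap f ->
  (forall n (g : G n) (x : X n), f n (act A g x) = act A' (phi n g) (f n x)) ->
  Kan_fibration phi -> Kan_fibration f.
Proof.
move=> HdX HdX' Hphi Hf Heq Hkan m k x y Hh Hy.
have hk := ltn_ord k.
(* A filler w of the horn in X; f w and y then share all faces but the k-th. *)
have [w hw] := horn_filler HdX Hh.
have hagree : agree_off k k.+1 (f m.+1 w) (fun j => smap (delta m j) y).
  move=> j hj hoff; have hjk : (inord j : 'I_m.+2) != k.
    by apply: contraTneq hoff => <-; rewrite /off_gap inordK //; lia.
  by rewrite -Hf !delta_face // hw // Hy.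
(* Sharing a face, f w and y are in one orbit: move f w onto y by some t
   trivial on the horn. *)
have [j0 hj0 hj0k] := other_index m k.
have horb : same_orbit A' (f m.+1 w) y.
  by apply: (same_orbit_face HdX' (j := j0)); rewrite hagree // /off_gap; lia.
have hgap : k < k.+1 <= m.+2 by lia.
have [t [ht htriv]] := rel_trans HdX' horb hgap hagree.
(* Lift t along phi to s trivial on the horn; s w fills the horn over y. *)
have hhorn : is_horn k (fun _ : 'I_m.+2 => gone G m).
  by move=> i j _ _ l a b _; rewrite !smap_gone.
have [|s [hs hphis]] := Hkan m k _ t hhorn.
  move=> i hik; rewrite shom_gone // face_delta.
  apply: (trivial_off_faces htriv); first by have := ltn_ord i; lia.
  by move: hik; rewrite -(inj_eq val_inj) /off_gap /=; lia.
exists (act A s w); split; last by rewrite Heq hphis.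
by move=> i hik; rewrite /face act_nat -!/(face i _) hs // hw // act_one.
Qed.
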